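(* Let $H$ be a subgroup of $\mathbb{Z}^\omega$ of countably infinite rank. Then there exist a group endomorphism $f$ of $\mathbb{Z}^\omega$ and positive integers $(d_n)_{n\in\omega}$ such that $f(H)$ contains the subgroup $\bigoplus_{n\in\omega} d_n\mathbb{Z}\,e_n$ of $\mathbb{Z}^{(\omega)}$, i.e. $d_ne_n\in f(H)$ for every $n\in\omega$.
   Context: $\mathbb{Z}^{\omega}$ is the product of countably many copies of $\mathbb{Z}$; $\mathbb{Z}^{(\omega)}\subseteq\mathbb{Z}^\omega$ is the subgroup of finitely supported sequences; $e_n\in\mathbb{Z}^{(\omega)}$ is the $n$-th standard unit vector. Rank means torsion-free rank. *)

From mathcomp Require Import all_boot all_order all_algebra.
Set Implicit Arguments. Unset Strict Implicit. Unset Printing Implicit Defensive.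
Import GRing.Theory.
Local Open Scope ring_scope.

Definition Zomega := nat -> int.

Definition zset := Zomega -> Prop.

Definition zadd (x y : Zomega) : Zomega := fun k => x k + y k.
Definition zopp (x : Zomega) : Zomega := fun k => - x k.
Definition zzero : Zomega := fun _ => 0.

Definition unitvec (n : nat) : Zomega := fun k => if k == n then 1 else 0.

Definition zscale (d : int) (x : Zomega) : Zomega := fun k => d * x k.

Definition is_subgroup (H : zset) : Prop :=
  H zzero /\ (forall x y, H x -> H y -> H (zadd x y)) /\ (forall x, H x -> H (zopp x)).

(* group endomorphism of Z^omega (additive map; no continuity assumed) *)
Definition is_endo (f : Zomega -> Zomega) : Prop :=
  forall x y, f (zadd x y) = zadd (f x) (f y).

Definition lin_indep (S : zset) : Prop :=
  forall (n : nat) (v : 'I_n -> Zomega) (c : 'I_n -> int),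
    injective v -> (forall i, S (v i)) ->
    (forall k : nat, \sum_(i < n) c i * v i k = 0) ->
    forall i, c i = 0.

(* torsion-free rank of H is countably infinite (= aleph_0):
   H contains an infinite independent set, and every independent subset
   of H is countable. *)
Definition countably_infinite_rank (H : zset) : Prop :=
  (exists v : nat -> Zomega, injective v /\ (forall n, H (v n)) /\
       lin_indep (fun x => exists n, x = v n)) /\
  (forall S : zset, (forall x, S x -> H x) -> lin_indep S ->
     exists g : Zomega -> nat, forall x y, S x -> S y -> g x = g y -> x = y).

From mathcomp Require Import all_boot all_order all_algebra.
From Stdlib Require Import Classical ClassicalEpsilon FunctionalExtensionality.

(* Since N+1 vectors of
   Z^N are dependent, for every N some nonzero element of H vanishes on the
   coordinates below N.  Iterating gives h_n in H and pivots k_n with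
   h_n(k_n) <> 0 and h_i(k_j) = 0 for j < i, so the matrix (h_i(k_j))_{j,i<=n}
   is lower triangular with nonzero determinant d_n.  The last row of its
   adjugate combines the coordinates x(k_0), ..., x(k_n) into a functional
   that vanishes at every h_i with i <> n and takes the value d_n at h_n; up
   to the sign of d_n, these functionals are the coordinates of f. *)

Set Implicit Arguments.
Unset Strict Implicit.
Unset Printing Implicit Defensive.
Import GRing.Theory Num.Theory.
Local Open Scope ring_scope.

Section SubgroupCombinations.

Variable H : zset.
Hypothesis subH : is_subgroup H.

Lemma subgroup_zscale z x : H x -> H (zscale z x).
Proof.
move=> Hx; have [H0 [HD HN]] := subH.
have nat_scale n : H (zscale n%:Z x).
  elim: n => [|n IHn].
    suff -> : zscale 0 x = zzero by [].
    by apply: functional_extensionality => k; rewrite /zscale mul0r.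
  suff -> : zscale n.+1%:Z x = zadd x (zscale n%:Z x) by apply: HD.
  by apply: functional_extensionality => k; rewrite /zscale /zadd intS mulrDl mul1r.
case: z => n; first exact: nat_scale.
suff -> : zscale (Negz n) x = zopp (zscale n.+1%:Z x) by apply/HN/nat_scale.
by apply: functional_extensionality => k; rewrite /zscale /zopp NegzE mulNr.
Qed.

Lemma subgroup_sum m (c : 'I_m -> int) (v : 'I_m -> Zomega) :
  (forall i, H (v i)) -> H (fun k => \sum_(i < m) c i * v i k).
Proof.
have [H0 [HD _]] := subH.
elim: m c v => [|m IHm] c v Hv.
  suff -> : (fun k => \sum_(i < 0) c i * v i k) = zzero by [].
  by apply: functional_extensionality => k; rewrite big_ord0.
pose c' i := c (widen_ord (leqnSn m) i); pose v' i := v (widen_ord (leqnSn m) i).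
suff -> : (fun k => \sum_(i < m.+1) c i * v i k) =
          zadd (fun k => \sum_(i < m) c' i * v' i k) (zscale (c ord_max) (v ord_max)).
  by apply: HD; [apply: IHm => i; apply: Hv | apply: subgroup_zscale].
by apply: functional_extensionality => k; rewrite big_ord_recr.
Qed.

End SubgroupCombinations.

Lemma int_mx_left_kernel m n (A : 'M[int]_(m, n)) :
  (n < m)%N -> exists2 c : 'rV[int]_m, c != 0 & c *m A = 0.
Proof.
move=> lt_nm; have [L uL [R _ [d _ defA]]] := int_Smith_normal_form A.
pose i := Ordinal lt_nm.
exists (row i (invmx L)).
  apply: contraTneq isT => c0.
  have := congr1 (fun c => (c *m L) 0 i) c0.
  by rewrite -row_mul mulVmx // mul0mx !mxE eqxx.
rewrite -row_mul defA !mulmxA mulVmx // mul1mx row_mul.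
suff -> : row i (\matrix_(i < m, j < n) (d`_i *+ (i == j :> nat))) = 0.
  by rewrite mul0mx.
by apply/rowP => j; rewrite !mxE gtn_eqF.
Qed.

Definition vanishes_below (N : nat) (w : Zomega) := forall j, (j < N)%N -> w j = 0.

Lemma exists_vanishing_below (H : zset) (v : nat -> Zomega) :
  is_subgroup H -> injective v -> (forall n, H (v n)) ->
  lin_indep (fun x => exists n, x = v n) ->
  forall N, exists w k, H w /\ vanishes_below N w /\ w k != 0.
Proof.
move=> subH v_inj vH v_indep N.
have [c c_neq0 cA] := int_mx_left_kernel (\matrix_(i < N.+1, j < N) v i j) (ltnSn N).
pose w k := \sum_(i < N.+1) c 0 i * v i k.
have w_low : vanishes_below N w.
  move=> j lt_jN; have := congr1 (fun M : 'M[int]_(1, N) => M 0 (Ordinal lt_jN)) cA.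
  by rewrite !mxE => <-; apply: eq_bigr => i _; rewrite mxE.
have [k wk_neq0] : exists k, w k != 0.
  apply: NNPP => w0; move/eqP: c_neq0; apply; apply/rowP => i; rewrite mxE.
  apply: (v_indep _ (fun i : 'I_N.+1 => v i)) => [a b /v_inj/val_inj //|j|k].
    by exists j.
  by apply/eqP/negPn/negP => wk_neq0; apply: w0; exists k.
by exists w, k; split; first exact: subgroup_sum.
Qed.

Lemma echelon_family (P : Zomega -> Prop) :
  (forall N, exists w k, P w /\ vanishes_below N w /\ w k != 0) ->
  exists (h : nat -> Zomega) (k : nat -> nat), (forall n, P (h n)) /\
    (forall n, h n (k n) != 0) /\ (forall j i, (j < i)%N -> h i (k j) = 0).
Proof.
move=> pivot.
have /choice [g gP] : forall N, exists p : Zomega * nat,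
    P p.1 /\ vanishes_below N p.1 /\ p.1 p.2 != 0.
  by move=> N; have [w [k wk]] := pivot N; exists (w, k).
have le_pivot N : (N <= (g N).2)%N.
  have [_ [low nz]] := gP N.
  by rewrite leqNgt; apply: contra nz => /low ->.
pose N n := iter n (fun m => (g m).2.+1) 0%N.
have N_mono : {homo N : i j / (i <= j)%N >-> (i <= j)%N}.
  by apply: homo_leq => [//|i j l|i]; [exact: leq_trans | exact/leqW/le_pivot].
exists (fun n => (g (N n)).1), (fun n => (g (N n)).2).
split; first by move=> n; have [] := gP (N n).
split; first by move=> n; have [_ []] := gP (N n).
move=> j i lt_ji; have [_ [vanish _]] := gP (N i).
exact/vanish/(N_mono _ _ lt_ji).
Qed.

Section TriangularDual.

Variables (V : Type) (R : idomainType) (h : nat -> V) (psi : nat -> V -> R).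

Definition pairing_mx n : 'M[R]_n.+1 := \matrix_(j, i) psi j (h i).

Definition dual_form n (x : V) : R :=
  \sum_(j < n.+1) \adj (pairing_mx n) ord_max j * psi j x.

Lemma dual_form_additive (add : V -> V -> V) :
  (forall j, {morph psi j : x y / add x y >-> x + y}) ->
  forall n, {morph dual_form n : x y / add x y >-> x + y}.
Proof.
by move=> psiD n x y; rewrite -big_split; apply: eq_bigr => j _; rewrite psiD mulrDr.
Qed.

Hypothesis psi_lower : forall j i, (j < i)%N -> psi j (h i) = 0.

Lemma det_pairing_mx_neq0 n :
  (forall i, psi i (h i) != 0) -> \det (pairing_mx n) != 0.
Proof.
move=> psi_diag; rewrite det_trig; last first.
  by apply/is_trig_mxP => j i lt_ji; rewrite mxE psi_lower.
by apply/prodf_neq0 => i _; rewrite mxE.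
Qed.

Lemma dual_form_pivot n i : dual_form n (h i) = \det (pairing_mx n) *+ (i == n).
Proof.
have [le_in | lt_ni] := leqP i n; last first.
  rewrite /dual_form gtn_eqF // big1 // => j _.
  by rewrite psi_lower ?mulr0 // (leq_ltn_trans (leq_ord j)).
have := congr1 (fun M : 'M[R]_n.+1 => M ord_max (Ordinal (le_in : (i < n.+1)%N)))
                (mul_adj_mx (pairing_mx n)).
rewrite !mxE /= eq_sym => <-.
by apply: eq_bigr => j _; rewrite /pairing_mx mxE.
Qed.

End TriangularDual.

Theorem mainTheorem3 (H : zset) :
  is_subgroup H -> countably_infinite_rank H ->
  exists (f : Zomega -> Zomega) (d : nat -> nat),
    is_endo f /\ (forall n, (0 < d n)%N) /\
    (forall n : nat, exists h, H h /\ f h = zscale (d n)%:Z (unitvec n)).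
Proof.
move=> subH [[v [v_inj [vH v_indep]]] _].
have [h [k [hH [h_pivot h_lower]]]] :=
  echelon_family (exists_vanishing_below subH v_inj vH v_indep).
pose psi j (x : Zomega) := x (k j).
pose D n := \det (pairing_mx h psi n).
exists (fun x n => sgz (D n) * dual_form h psi n x), (fun n => `|D n|%N).
split; [|split].
- move=> x y; apply: functional_extensionality => n.
  by rewrite (@dual_form_additive _ _ h psi zadd) // mulrDr.
- by move=> n; rewrite absz_gt0 det_pairing_mx_neq0.
- move=> n; exists (h n); split => //; apply: functional_extensionality => m.
  rewrite dual_form_pivot // /zscale /unitvec eq_sym.
  by case: eqP => [->|_]; rewrite ?mulr0n ?mulr0 // mulr1n mulr1 abszEsg.
Qed.
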